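(* Let $a=\pi/4$ and let $(C_2,g_{hex})$ be the quotient of the singular torus $(T,g_{hex})$ (defined below) by the group of order $2$ generated by the isometry $\sigma$ induced by $(x,y,z)\mapsto(-x,-y,z+\pi)$. Then $$\frac{\mathrm{Sys}(C_2,g_{hex})^3}{\mathrm{Vol}(C_2,g_{hex})}>\frac{2}{\sqrt3}.$$
   Context: $\Delta\subset\mathbb{R}^2$ is the hexagonal lattice generated by $(2a,0)$ and $(a,a\sqrt3)$. On $\mathbb{R}^3$ with coordinates $(x,y,z)$, $h=dx^2+dy^2+\cos^2\!\big(\mathrm{dist}((x,y),\Delta)\big)\,dz^2$ is a continuous Riemannian metric ($\mathrm{dist}$ Euclidean in $\mathbb{R}^2$). $(T,g_{hex})$ is the quotient of $(\mathbb{R}^3,h)$ by the translations $(x,y,z)\mapsto(x+4a,y,z)$, $(x,y,z)\mapsto(x+2a,y+2a\sqrt3,z)$, $(x,y,z)\mapsto(x,y,z+2\pi)$. $\sigma$ acts freely on $T$ and the quotient is homeomorphic to the orientable Bieberbach manifold of type $C_2$ (holonomy $\mathbb{Z}_2$). $\mathrm{Sys}$ denotes the infimum of lengths $\int (h(\gamma',\gamma'))^{1/2}dt$ of non-contractible piecewise smooth closed curves and $\mathrm{Vol}$ the Riemannian volume (volume form $\cos(\mathrm{dist}((x,y),\Delta))\,dx\,dy\,dz$). *)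

From Stdlib Require Import Reals Lra List ZArith.
From Coquelicot Require Import Coquelicot.
Open Scope R_scope.

Definition a_hex : R := PI / 4.

Definition distDelta (a x y : R) : R :=
  real (Glb_Rbar (fun r => exists m n : Z,
    r = sqrt ((x - (2 * a * IZR m + a * IZR n)) ^ 2
              + (y - a * sqrt 3 * IZR n) ^ 2))).

Definition pt := (R * R * R)%type.

(** Generators of the deck group Gamma of R^3 -> C_2 = T / <sigma>:
    the three translations defining T and the lift of sigma. *)
Inductive gen := T1 | T2 | T3 | Sig.

Definition act (a : R) (g : gen) (b : bool) (p : pt) : pt :=
  let '(x, y, z) := p in
  match g, b with
  | T1, true  => (x + 4 * a, y, z)
  | T1, false => (x - 4 * a, y, z)
  | T2, true  => (x + 2 * a, y + 2 * a * sqrt 3, z)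
  | T2, false => (x - 2 * a, y - 2 * a * sqrt 3, z)
  | T3, true  => (x, y, z + 2 * PI)
  | T3, false => (x, y, z - 2 * PI)
  | Sig, true  => (- x, - y, z + PI)
  | Sig, false => (- x, - y, z - PI)
  end.

Definition word_act (a : R) (w : list (gen * bool)) (p : pt) : pt :=
  fold_right (fun gb q => act a (fst gb) (snd gb) q) p w.

Definition C1 (f : R -> R) : Prop :=
  forall t, ex_derive f t /\ continuous (Derive f) t.

(** Speed |c'(t)|_h of a C^1 curve c = (fx,fy,fz) for the metric
    h = dx^2 + dy^2 + cos^2(dist((x,y),Delta)) dz^2. *)
Definition speed (a : R) (fx fy fz : R -> R) (t : R) : R :=
  sqrt ((Derive fx t) ^ 2 + (Derive fy t) ^ 2
        + (cos (distDelta a (fx t) (fy t))) ^ 2 * (Derive fz t) ^ 2).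

(** [pw_len a c u l L]: on [u, 1], with subdivision points l (ending at 1),
    c is piecewise C^1 (each piece is the restriction of a C^1 map on the
    closed subinterval) and its h-length is L. *)
Fixpoint pw_len (a : R) (c : R -> pt) (u : R) (l : list R) (L : R) : Prop :=
  match l with
  | nil => u = 1 /\ L = 0
  | v :: l' =>
      u < v /\
      exists fx fy fz : R -> R,
        C1 fx /\ C1 fy /\ C1 fz /\
        (forall t, u <= t <= v -> c t = (fx t, fy t, fz t)) /\
        exists L', pw_len a c v l' L' /\
                   L = RInt (speed a fx fy fz) u v + L'
  end.

Definition curve_length (a : R) (c : R -> pt) (L : R) : Prop :=
  exists l, pw_len a c 0 l L.

(** Systole of C_2 = R^3 / Gamma: non-contractible piecewise smooth closed
    curves in the quotient are exactly projections of piecewise smooth paths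
    c in the universal cover R^3 with c(1) = g(c(0)) for a non-trivial deck
    transformation g in Gamma. *)
Definition Sys_C2 (a : R) : R :=
  real (Glb_Rbar (fun L => exists (c : R -> pt) (w : list (gen * bool)),
    (exists q, word_act a w q <> q) /\
    c 1 = word_act a w (c 0) /\
    curve_length a c L)).

(** Riemannian volume of C_2: integral of the volume density
    cos(dist((x,y),Delta)) over the fundamental domain
    [0,4a) x [0, 2a sqrt 3) x [0, pi) of Gamma. *)
Definition Vol_C2 (a : R) : R :=
  RInt (fun z =>
    RInt (fun y =>
      RInt (fun x => cos (distDelta a x y)) 0 (4 * a)) 0 (2 * a * sqrt 3)) 0 PI.

From Pilot Require Import Defs.
From Stdlib Require Import Reals.
From Coquelicot Require Import Coquelicot.
From Stdlib Require Import Lra Lia ZArith Classical.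
Open Scope R_scope.

(* The systole is at least pi: every non-contractible loop lifts to a path from
   p to g p for a non-trivial deck transformation g, and we bound its length
   below by F (g p) - F p for functions F that are 1-Lipschitz for h.  Since
   a = pi/4, every point is within pi/3 of the lattice, so cos (dist) >= 1/2 and
   z/2 is 1-Lipschitz: this handles g acting on z by at least 2 pi.  A pure
   translation moves (x, y) by a vector of the lattice 2 Delta, of length at
   least pi, and a linear form handles it.  If g is a half-turn about a point q
   of Delta shifted by +-pi in z, the metric near the axis over q is that of the
   round 3-sphere: polar coordinates (r, theta) around q and the map
   (r, theta, z) |-> (cos r e^{iz}, sin r e^{i theta}) into S^3, with r capped
   at pi/2, are 1-Lipschitz for h and conjugate g to the antipodal map, so the
   spherical distance to the image of p grows by pi along the path.
   The volume is pi times the integral of cos (dist) over a hexagonal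
   fundamental domain of area pi^2 sqrt 3 / 2, and cos (dist) < 1 off Delta, so
   Vol < pi^3 sqrt 3 / 2 <= sqrt 3 / 2 * Sys^3. *)

Lemma sqr_ge0_sum (u v : R) : 0 <= u ^ 2 + v ^ 2.
Proof. pose proof (pow2_ge_0 u); pose proof (pow2_ge_0 v); lra. Qed.

Lemma sqr_ge0_sum3 (u v w : R) : 0 <= u ^ 2 + v ^ 2 + w ^ 2.
Proof. pose proof (pow2_ge_0 u); pose proof (pow2_ge_0 v); pose proof (pow2_ge_0 w); lra. Qed.

Lemma sqrt_le_of_sqr_le (u v : R) : 0 <= v -> u <= v ^ 2 -> sqrt u <= v.
Proof.
  intros Hv Huv. rewrite <- (sqrt_pow2 v Hv). destruct (Rle_lt_dec 0 u).
  - apply sqrt_le_1; auto; apply pow2_ge_0.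
  - rewrite sqrt_neg_0 by lra. apply sqrt_pos.
Qed.

Lemma le_sqrt_of_sqr_le (u v : R) : u ^ 2 <= v -> u <= sqrt v.
Proof.
  intros Huv. destruct (Rle_lt_dec u 0) as [Hu|Hu].
  - pose proof (sqrt_pos v). lra.
  - pose proof (pow2_ge_0 u). rewrite <- (sqrt_pow2 u) by lra. apply sqrt_le_1; lra.
Qed.

Lemma minkowski3 (p1 p2 p3 q1 q2 q3 : R) :
  sqrt ((p1 + q1) ^ 2 + (p2 + q2) ^ 2 + (p3 + q3) ^ 2) <=
  sqrt (p1 ^ 2 + p2 ^ 2 + p3 ^ 2) + sqrt (q1 ^ 2 + q2 ^ 2 + q3 ^ 2).
Proof.
  set (P := p1 ^ 2 + p2 ^ 2 + p3 ^ 2). set (Q := q1 ^ 2 + q2 ^ 2 + q3 ^ 2).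
  assert (HP : 0 <= P) by apply sqr_ge0_sum3. assert (HQ : 0 <= Q) by apply sqr_ge0_sum3.
  assert (Hcs : p1 * q1 + p2 * q2 + p3 * q3 <= sqrt P * sqrt Q).
  { rewrite <- sqrt_mult by lra. apply le_sqrt_of_sqr_le. unfold P, Q.
    assert (Hlagrange : (p1 ^ 2 + p2 ^ 2 + p3 ^ 2) * (q1 ^ 2 + q2 ^ 2 + q3 ^ 2)
      - (p1 * q1 + p2 * q2 + p3 * q3) ^ 2
      = (p1 * q2 - p2 * q1) ^ 2 + (p1 * q3 - p3 * q1) ^ 2 + (p2 * q3 - p3 * q2) ^ 2) by ring.
    pose proof (sqr_ge0_sum3 (p1 * q2 - p2 * q1) (p1 * q3 - p3 * q1) (p2 * q3 - p3 * q2)). lra. }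
  apply sqrt_le_of_sqr_le; [pose proof (sqrt_pos P); pose proof (sqrt_pos Q); lra|].
  replace ((sqrt P + sqrt Q) ^ 2) with (sqrt P ^ 2 + sqrt Q ^ 2 + 2 * (sqrt P * sqrt Q)) by ring.
  rewrite !pow2_sqrt by lra. unfold P, Q in *. nra.
Qed.

Lemma minkowski2 (p1 p2 q1 q2 : R) :
  sqrt ((p1 + q1) ^ 2 + (p2 + q2) ^ 2) <= sqrt (p1 ^ 2 + p2 ^ 2) + sqrt (q1 ^ 2 + q2 ^ 2).
Proof.
  pose proof (minkowski3 p1 p2 0 q1 q2 0) as H.
  replace ((0 + 0) ^ 2) with 0 in H by ring. replace (0 ^ 2) with 0 in H by ring.
  rewrite !Rplus_0_r in H. exact H.
Qed.

Lemma cauchy_schwarz2 (x1 y1 x2 y2 : R) :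
  x1 * x2 + y1 * y2 <= sqrt (x1 ^ 2 + y1 ^ 2) * sqrt (x2 ^ 2 + y2 ^ 2).
Proof.
  rewrite <- sqrt_mult by apply sqr_ge0_sum.
  apply le_sqrt_of_sqr_le. pose proof (pow2_ge_0 (x1 * y2 - x2 * y1)). nra.
Qed.

Lemma sqrt_sum_sq_le (u v : R) : 0 <= u -> 0 <= v -> sqrt (u ^ 2 + v ^ 2) <= u + v.
Proof. intros Hu Hv. apply sqrt_le_of_sqr_le; nra. Qed.

Lemma sqrt_sum_sq_le_abs (u v : R) : sqrt (u ^ 2 + v ^ 2) <= Rabs u + Rabs v.
Proof.
  rewrite <- (pow2_abs u), <- (pow2_abs v). apply sqrt_sum_sq_le; apply Rabs_pos.
Qed.

(** * Distance to the lattice *)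

Section LatticeDistance.
Variable a : R.

Definition lattice_dists (x y : R) : R -> Prop := fun r => exists m n : Z,
  r = sqrt ((x - (2 * a * IZR m + a * IZR n)) ^ 2 + (y - a * sqrt 3 * IZR n) ^ 2).

Lemma Glb_lattice_dists (x y : R) : Glb_Rbar (lattice_dists x y) = Finite (distDelta a x y).
Proof.
  unfold distDelta. fold (lattice_dists x y).
  destruct (Glb_Rbar_correct (lattice_dists x y)) as [Hlb Hglb].
  destruct (Glb_Rbar (lattice_dists x y)) as [l| |]; auto; exfalso.
  - apply (Hlb (sqrt ((x - (2 * a * IZR 0 + a * IZR 0)) ^ 2 + (y - a * sqrt 3 * IZR 0) ^ 2))).
    exists 0%Z, 0%Z. reflexivity.
  - apply (Hglb (Finite 0)). intros r [m [n ->]]. apply sqrt_pos.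
Qed.

Lemma distDelta_le (x y : R) (m n : Z) :
  distDelta a x y <= sqrt ((x - (2 * a * IZR m + a * IZR n)) ^ 2 + (y - a * sqrt 3 * IZR n) ^ 2).
Proof.
  destruct (Glb_Rbar_correct (lattice_dists x y)) as [Hlb _].
  rewrite Glb_lattice_dists in Hlb. apply (Hlb _). exists m, n. reflexivity.
Qed.

Lemma distDelta_ge (x y b : R) :
  (forall m n : Z, b <= sqrt ((x - (2 * a * IZR m + a * IZR n)) ^ 2 + (y - a * sqrt 3 * IZR n) ^ 2)) ->
  b <= distDelta a x y.
Proof.
  intros H. destruct (Glb_Rbar_correct (lattice_dists x y)) as [_ Hglb].
  rewrite Glb_lattice_dists in Hglb. apply (Hglb (Finite b)). intros r [m [n ->]]. apply H.
Qed.

Lemma distDelta_ge0 (x y : R) : 0 <= distDelta a x y.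
Proof. apply distDelta_ge. intros; apply sqrt_pos. Qed.

Lemma distDelta_lipschitz (x y x' y' : R) :
  distDelta a x' y' <= distDelta a x y + sqrt ((x' - x) ^ 2 + (y' - y) ^ 2).
Proof.
  cut (distDelta a x' y' - sqrt ((x' - x) ^ 2 + (y' - y) ^ 2) <= distDelta a x y); [lra|].
  apply distDelta_ge. intros m n.
  pose proof (distDelta_le x' y' m n).
  pose proof (minkowski2 (x - (2 * a * IZR m + a * IZR n)) (y - a * sqrt 3 * IZR n) (x' - x) (y' - y)).
  replace (x - (2 * a * IZR m + a * IZR n) + (x' - x)) with (x' - (2 * a * IZR m + a * IZR n)) in * by ring.
  replace (y - a * sqrt 3 * IZR n + (y' - y)) with (y' - a * sqrt 3 * IZR n) in * by ring.
  lra.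
Qed.

Lemma distDelta_lipschitz_abs (x y x' y' : R) :
  Rabs (distDelta a x' y' - distDelta a x y) <= Rabs (x' - x) + Rabs (y' - y).
Proof.
  pose proof (distDelta_lipschitz x y x' y'). pose proof (distDelta_lipschitz x' y' x y).
  pose proof (sqrt_sum_sq_le_abs (x' - x) (y' - y)). pose proof (sqrt_sum_sq_le_abs (x - x') (y - y')).
  rewrite (Rabs_minus_sym x x'), (Rabs_minus_sym y y') in *. apply Rabs_le; lra.
Qed.

End LatticeDistance.

Lemma sqrt3_pos : 0 < sqrt 3.
Proof. apply sqrt_lt_R0; lra. Qed.

Lemma sqrt3_sqr : sqrt 3 * sqrt 3 = 3.
Proof. apply sqrt_sqrt; lra. Qed.

Lemma nearest_int (s : R) : exists n : Z, -(1/2) <= s - IZR n <= 1/2.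
Proof. exists (up (s - 1/2)). destruct (archimed (s - 1/2)). lra. Qed.

(* Rounding the coordinates in the basis (2a, 0), (a, a sqrt 3) of Delta leaves
   an offset (2a s, a sqrt 3 t) with |s|, |t| <= 1/2, of length at most
   a sqrt 7 / 2 < pi / 3 for a = pi / 4. *)
Lemma distDelta_hex_le (x y : R) : distDelta a_hex x y <= PI / 3.
Proof.
  set (a := a_hex). assert (Ha : a = PI / 4) by reflexivity. pose proof PI_RGT_0.
  pose proof sqrt3_pos. pose proof sqrt3_sqr.
  destruct (nearest_int (y / (a * sqrt 3))) as [n Hn].
  destruct (nearest_int ((x - a * IZR n) / (2 * a))) as [m Hm].
  eapply Rle_trans; [apply (distDelta_le a x y m n)|].
  set (s := (x - a * IZR n) / (2 * a) - IZR m) in *. set (t := y / (a * sqrt 3) - IZR n) in *.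
  replace (x - (2 * a * IZR m + a * IZR n)) with (2 * a * s) by (unfold s; field; lra).
  replace (y - a * sqrt 3 * IZR n) with (a * sqrt 3 * t) by (unfold t; field; lra).
  apply sqrt_le_of_sqr_le; [lra|].
  replace ((a * sqrt 3 * t) ^ 2) with (a ^ 2 * t ^ 2 * (sqrt 3 * sqrt 3)) by ring.
  rewrite sqrt3_sqr.
  assert (Hst : 4 * s ^ 2 + 3 * t ^ 2 <= 7 / 4) by nra.
  rewrite Ha. assert (0 <= PI ^ 2) by apply pow2_ge_0. nra.
Qed.

Lemma cos_distDelta_hex_ge (x y : R) : 1 / 2 <= cos (distDelta a_hex x y).
Proof.
  rewrite <- cos_PI3. pose proof (distDelta_hex_le x y). pose proof (distDelta_ge0 a_hex x y).
  pose proof PI_RGT_0.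
  destruct (Req_dec (distDelta a_hex x y) (PI / 3)) as [->|]; [lra|].
  left. apply cos_decreasing_1; lra.
Qed.

(** * Continuity and integrals on the real line *)

Lemma continuous_of_eps (f : R -> R) (x : R) :
  (forall eps, 0 < eps -> exists d, 0 < d /\ forall y, Rabs (y - x) < d -> Rabs (f y - f x) < eps) ->
  continuous f x.
Proof.
  intros H. apply continuity_pt_filterlim. intros eps Heps.
  destruct (H eps Heps) as [d [Hd Hy]]. exists d. split; auto.
  intros y [_ Hdist]. apply Hy, Hdist.
Qed.

Lemma continuous_eps (f : R -> R) (x : R) : continuous f x ->
  forall eps, 0 < eps -> exists d, 0 < d /\ forall y, Rabs (y - x) < d -> Rabs (f y - f x) < eps.
Proof.
  intros H. apply continuity_pt_filterlim in H. intros eps Heps.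
  destruct (H eps Heps) as [d [Hd Hy]]. exists d. split; auto. intros y Hyx.
  destruct (Req_dec y x) as [->|Hne].
  - rewrite Rminus_diag, Rabs_R0. lra.
  - apply (Hy y). split; [split; auto | exact Hyx]. constructor.
Qed.

Lemma continuous_const_R (k t : R) : continuous (fun _ : R => k) t.
Proof. apply (continuous_const (U := R_UniformSpace) (V := R_UniformSpace)). Qed.

Lemma continuous_pow2 (f : R -> R) (t : R) : continuous f t -> continuous (fun s => f s ^ 2) t.
Proof.
  intros H. apply (continuous_ext (fun s => f s * f s)).
  { intros x. change (f x * f x = f x ^ 2). ring. }
  exact (continuous_mult f f t H H).
Qed.

Lemma RInt_const_R (u v c : R) : RInt (fun _ => c) u v = (v - u) * c.
Proof. rewrite RInt_const. reflexivity. Qed.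

Section Integrals.
Variable g : R -> R.
Hypothesis g_cont : forall t, continuous g t.

Lemma ex_RInt_cont (u v : R) : ex_RInt g u v.
Proof. apply (ex_RInt_continuous (V := R_CompleteNormedModule)). intros; apply g_cont. Qed.

Lemma RInt_Chasles_R (u v w : R) : RInt g u v + RInt g v w = RInt g u w.
Proof. rewrite <- (RInt_Chasles g u v w); auto using ex_RInt_cont. Qed.

Lemma RInt_ge_const (u v m : R) : u <= v ->
  (forall t, u <= t <= v -> m <= g t) -> (v - u) * m <= RInt g u v.
Proof.
  intros Huv Hm. rewrite <- (RInt_const_R u v m). apply RInt_le; auto using ex_RInt_cont.
  - apply ex_RInt_const.
  - intros; apply Hm; lra.
Qed.

Lemma RInt_le_const (u v m : R) : u <= v ->
  (forall t, u <= t <= v -> g t <= m) -> RInt g u v <= (v - u) * m.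
Proof.
  intros Huv Hm. rewrite <- (RInt_const_R u v m). apply RInt_le; auto using ex_RInt_cont.
  - apply ex_RInt_const.
  - intros; apply Hm; lra.
Qed.

Lemma RInt_local_bound (t : R) :
  exists d C, 0 < d /\ forall s, Rabs s < d -> Rabs (RInt g t (t + s)) <= Rabs s * C.
Proof.
  destruct (continuous_eps g t (g_cont t) 1 Rlt_0_1) as [d [Hd Hy]].
  exists d, (Rabs (g t) + 1). split; auto. intros s Hs.
  assert (Hb : forall r, Rabs (r - t) < d -> Rabs (g r) <= Rabs (g t) + 1).
  { intros r Hr. specialize (Hy r Hr). pose proof (Rabs_triang_inv (g r) (g t)). lra. }
  destruct (Rle_lt_dec 0 s).
  - rewrite (Rabs_right s) in * by lra. replace s with (t + s - t) at 2 by ring.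
    apply abs_RInt_le_const; [lra | apply ex_RInt_cont |].
    intros x Hx. apply Hb. rewrite Rabs_right; lra.
  - rewrite (Rabs_left s) in * by lra.
    rewrite <- (opp_RInt_swap g) by apply ex_RInt_cont.
    change (Rabs (- RInt g (t + s) t) <= - s * (Rabs (g t) + 1)).
    rewrite Rabs_Ropp. replace (- s) with (t - (t + s)) by ring.
    apply abs_RInt_le_const; [lra | apply ex_RInt_cont |].
    intros x Hx. apply Hb. apply Rabs_lt_between. lra.
Qed.

End Integrals.

Lemma RInt_lt_at (f g : R -> R) (u v t0 : R) :
  (forall t, continuous f t) -> (forall t, continuous g t) -> u < t0 < v ->
  (forall t, u <= t <= v -> f t <= g t) -> f t0 < g t0 -> RInt f u v < RInt g u v.
Proof.
  intros Hf Hg Ht0 Hle Hlt.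
  destruct (continuous_eps (fun t => g t - f t) t0 (continuous_minus g f t0 (Hg t0) (Hf t0))
    ((g t0 - f t0) / 2) ltac:(lra)) as [d [Hd Hdh]].
  set (r := Rmin d (Rmin (t0 - u) (v - t0)) / 2).
  assert (Hr : 0 < r /\ r < d /\ r < t0 - u /\ r < v - t0).
  { assert (0 < Rmin d (Rmin (t0 - u) (v - t0))) by (repeat apply Rmin_pos; lra).
    pose proof (Rmin_l d (Rmin (t0 - u) (v - t0))). pose proof (Rmin_r d (Rmin (t0 - u) (v - t0))).
    pose proof (Rmin_l (t0 - u) (v - t0)). pose proof (Rmin_r (t0 - u) (v - t0)). unfold r. lra. }
  rewrite <- (RInt_Chasles_R f Hf u (t0 - r) v), <- (RInt_Chasles_R f Hf (t0 - r) (t0 + r) v).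
  rewrite <- (RInt_Chasles_R g Hg u (t0 - r) v), <- (RInt_Chasles_R g Hg (t0 - r) (t0 + r) v).
  assert (RInt f u (t0 - r) <= RInt g u (t0 - r)).
  { apply RInt_le; auto using ex_RInt_cont; [lra|]. intros; apply Hle; lra. }
  assert (RInt f (t0 + r) v <= RInt g (t0 + r) v).
  { apply RInt_le; auto using ex_RInt_cont; [lra|]. intros; apply Hle; lra. }
  assert (RInt f (t0 - r) (t0 + r) < RInt g (t0 - r) (t0 + r)).
  { apply RInt_lt; auto; [lra|]. intros x Hx.
    assert (Hxd : Rabs (x - t0) < d) by (apply Rabs_lt_between; lra).
    specialize (Hdh x Hxd). apply Rabs_lt_between in Hdh. lra. }
  lra.
Qed.

Lemma real_induction (P : R -> Prop) (u v : R) : u <= v -> P u ->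
  (forall t, u < t <= v -> (forall r, u <= r < t -> P r) -> P t) ->
  (forall t, u <= t < v -> (forall r, u <= r <= t -> P r) ->
     exists d, 0 < d /\ forall r, t < r < t + d -> P r) ->
  P v.
Proof.
  intros Huv Hu Hclosed Hopen.
  set (A := fun t => u <= t <= v /\ forall r, u <= r <= t -> P r).
  assert (HAu : A u) by (split; [lra | intros r Hr; replace r with u by lra; exact Hu]).
  destruct (completeness A) as [T [HTub HTlub]].
  { exists v. intros t [Ht _]. lra. }
  { exists u. exact HAu. }
  assert (HuT : u <= T) by (apply HTub, HAu).
  assert (HTv : T <= v) by (apply HTlub; intros t [Ht _]; lra).
  assert (Hbelow : forall r, u <= r < T -> P r).
  { intros r Hr. apply NNPP. intros HPr. cut (T <= r); [lra|].
    apply HTlub. intros t [Ht HPt]. destruct (Rle_lt_dec t r) as [Htr|Hrt]; auto.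
    exfalso. apply HPr, HPt. lra. }
  assert (HAT : A T).
  { split; [lra|]. intros r Hr. destruct (Rle_lt_dec T r) as [HTr|HrT]; [|apply Hbelow; lra].
    replace r with T by lra. destruct (Req_dec T u) as [->|HTu]; [exact Hu|].
    apply Hclosed; [lra | exact Hbelow]. }
  destruct (Req_dec T v) as [<-|HTv']; [apply HAT; lra|].
  exfalso. destruct (Hopen T ltac:(lra) (proj2 HAT)) as [d [Hd HPd]].
  set (T' := T + Rmin d (v - T) / 2).
  assert (HT' : T < T' /\ T' < T + d /\ T' <= v).
  { assert (0 < Rmin d (v - T)) by (apply Rmin_pos; lra).
    pose proof (Rmin_l d (v - T)). pose proof (Rmin_r d (v - T)). unfold T'. lra. }
  assert (A T').
  { split; [lra|]. intros r Hr. destruct (Rle_lt_dec r T); [apply HAT; lra | apply HPd; lra]. }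
  assert (T' <= T) by (apply HTub; auto). lra.
Qed.

Lemma le_at_left_end (f : R -> R) (u t : R) : u < t ->
  (forall eps, 0 < eps -> exists d, 0 < d /\ forall r, t - d < r < t -> f t <= f r + eps) ->
  (forall r, u <= r < t -> f r <= 0) -> f t <= 0.
Proof.
  intros Hut Hlim Hle. apply Rle_plus_epsilon. intros eps Heps. rewrite Rplus_0_l.
  destruct (Hlim eps Heps) as [d [Hd Hr]].
  set (r := t - Rmin d (t - u) / 2).
  assert (t - d < r < t /\ u <= r).
  { assert (0 < Rmin d (t - u)) by (apply Rmin_pos; lra).
    pose proof (Rmin_l d (t - u)). pose proof (Rmin_r d (t - u)). unfold r. lra. }
  specialize (Hr r ltac:(lra)). specialize (Hle r ltac:(lra)). lra.
Qed.

Section IncrementBound.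
Variables (h g : R -> R) (u v : R).
Hypothesis g_cont : forall t, continuous g t.
Hypothesis h_increment : forall t, u <= t <= v -> forall eps, 0 < eps -> exists d, 0 < d /\
  forall s, Rabs s < d -> u <= t + s <= v -> Rabs (h (t + s) - h t) <= Rabs s * (g t + eps).

Let excess (eps t : R) : R := h t - h u - (RInt g u t + eps * (t - u)).

Lemma excess_left_closed (eps t : R) : 0 < eps -> u < t <= v ->
  (forall r, u <= r < t -> excess eps r <= 0) -> excess eps t <= 0.
Proof.
  intros Heps Ht Hbelow. apply (le_at_left_end (excess eps) u t); [lra | | exact Hbelow].
  intros e He.
  destruct (h_increment t ltac:(lra) 1 Rlt_0_1) as [d1 [Hd1 Hinc]].
  destruct (RInt_local_bound g g_cont t) as [d2 [C [Hd2 Hint]]].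
  set (K := Rabs (g t + 1) + Rabs C + 1).
  assert (HK : 0 < K) by (unfold K; pose proof (Rabs_pos (g t + 1)); pose proof (Rabs_pos C); lra).
  exists (Rmin (Rmin d1 d2) (Rmin (t - u) (e / (2 * K)))). split.
  { repeat apply Rmin_pos; try lra. apply Rdiv_lt_0_compat; lra. }
  intros r Hr. set (s := r - t). assert (Hsr : s = r - t) by reflexivity.
  assert (Hs : 0 < - s /\ - s < d1 /\ - s < d2 /\ - s < t - u /\ 2 * (- s * K) < e).
  { pose proof (Rmin_l (Rmin d1 d2) (Rmin (t - u) (e / (2 * K)))).
    pose proof (Rmin_r (Rmin d1 d2) (Rmin (t - u) (e / (2 * K)))).
    pose proof (Rmin_l d1 d2). pose proof (Rmin_r d1 d2).
    pose proof (Rmin_l (t - u) (e / (2 * K))). pose proof (Rmin_r (t - u) (e / (2 * K))).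
    assert (HsK : - s < e / (2 * K)) by lra.
    apply (Rmult_lt_compat_r (2 * K)) in HsK; [|lra].
    replace (e / (2 * K) * (2 * K)) with e in HsK by (field; lra).
    lra. }
  assert (Hsd1 : Rabs s < d1) by (rewrite Rabs_left; lra).
  assert (Hsd2 : Rabs s < d2) by (rewrite Rabs_left; lra).
  specialize (Hinc s Hsd1 ltac:(unfold s; lra)). specialize (Hint s Hsd2).
  replace (t + s) with r in * by (unfold s; ring).
  rewrite (Rabs_left s) in Hinc, Hint by lra.
  apply Rabs_le_between in Hinc. apply Rabs_le_between in Hint.
  unfold excess. rewrite <- (RInt_Chasles_R g g_cont u t r).
  assert (- s * (g t + 1) <= - s * K)
    by (apply Rmult_le_compat_l; [lra|]; unfold K; pose proof (Rle_abs (g t + 1)); pose proof (Rabs_pos C); lra).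
  assert (- s * C <= - s * K)
    by (apply Rmult_le_compat_l; [lra|]; unfold K; pose proof (Rle_abs C); pose proof (Rabs_pos (g t + 1)); lra).
  assert (Hdrift : eps * (r - u) = eps * (t - u) - eps * - s) by (unfold s; ring).
  assert (0 <= eps * - s) by (apply Rmult_le_pos; lra).
  rewrite Hdrift. lra.
Qed.

Lemma excess_right_open (eps t : R) : 0 < eps -> u <= t < v -> excess eps t <= 0 ->
  exists d, 0 < d /\ forall r, t < r < t + d -> excess eps r <= 0.
Proof.
  intros Heps Ht Hexc.
  destruct (h_increment t ltac:(lra) (eps / 2) ltac:(lra)) as [d1 [Hd1 Hinc]].
  destruct (continuous_eps g t (g_cont t) (eps / 2) ltac:(lra)) as [d2 [Hd2 Hgt]].
  exists (Rmin (Rmin d1 d2) (v - t)). split; [repeat apply Rmin_pos; lra|].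
  intros r Hr. set (s := r - t).
  assert (Hs : 0 < s /\ s < d1 /\ s < d2 /\ r <= v).
  { pose proof (Rmin_l (Rmin d1 d2) (v - t)). pose proof (Rmin_r (Rmin d1 d2) (v - t)).
    pose proof (Rmin_l d1 d2). pose proof (Rmin_r d1 d2). unfold s. lra. }
  assert (Hsd1 : Rabs s < d1) by (rewrite Rabs_right; lra).
  specialize (Hinc s Hsd1 ltac:(unfold s; lra)). rewrite (Rabs_right s) in Hinc by lra.
  replace (t + s) with r in Hinc by (unfold s; ring). apply Rabs_le_between in Hinc.
  assert (Hint : s * (g t - eps / 2) <= RInt g t r).
  { apply RInt_ge_const; auto; [lra|].
    intros x Hx. assert (Hxt : Rabs (x - t) < d2) by (rewrite Rabs_right; unfold s in *; lra).
    specialize (Hgt x Hxt). apply Rabs_lt_between in Hgt. lra. }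
  unfold excess in *. rewrite <- (RInt_Chasles_R g g_cont u t r).
  assert (Hrs : r - u = t - u + s) by (unfold s; ring). rewrite Hrs. nra.
Qed.

Lemma increment_le_RInt : u < v -> h v - h u <= RInt g u v.
Proof.
  intros Huv.
  cut (forall eps, 0 < eps -> h v - h u <= RInt g u v + eps * (v - u)).
  { intros H. apply Rle_plus_epsilon. intros eps Heps.
    specialize (H (eps / (v - u)) ltac:(apply Rdiv_lt_0_compat; lra)).
    replace (eps / (v - u) * (v - u)) with eps in H by (field; lra). exact H. }
  intros eps Heps. cut (excess eps v <= 0); [unfold excess; lra|].
  apply (real_induction (fun t => excess eps t <= 0) u v); [lra | | |].
  - unfold excess. rewrite RInt_point. unfold zero; simpl. lra.
  - intros t Ht. apply excess_left_closed; auto.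
  - intros t Ht Hupto. apply excess_right_open; auto. apply Hupto; lra.
Qed.

End IncrementBound.

(** * Lengths of curves and h-Lipschitz functions *)

Definition hnorm (k w1 w2 w3 : R) : R := sqrt (w1 ^ 2 + w2 ^ 2 + (k * w3) ^ 2).

Lemma hnorm_triangle (k p1 p2 p3 q1 q2 q3 : R) :
  hnorm k (p1 + q1) (p2 + q2) (p3 + q3) <= hnorm k p1 p2 p3 + hnorm k q1 q2 q3.
Proof. unfold hnorm. rewrite Rmult_plus_distr_l. apply minkowski3. Qed.

Lemma hnorm_scal (k s w1 w2 w3 : R) : hnorm k (s * w1) (s * w2) (s * w3) = Rabs s * hnorm k w1 w2 w3.
Proof.
  unfold hnorm. rewrite <- (sqrt_pow2 (Rabs s)) by apply Rabs_pos.
  rewrite <- sqrt_mult by (apply pow2_ge_0 || apply sqr_ge0_sum3). f_equal. rewrite pow2_abs. ring.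
Qed.

Lemma hnorm_le_abs (k w1 w2 w3 : R) : Rabs k <= 1 -> hnorm k w1 w2 w3 <= Rabs w1 + Rabs w2 + Rabs w3.
Proof.
  intros Hk. unfold hnorm.
  pose proof (Rabs_pos w1); pose proof (Rabs_pos w2); pose proof (Rabs_pos w3); pose proof (Rabs_pos k).
  apply sqrt_le_of_sqr_le; [lra|].
  rewrite <- (pow2_abs w1), <- (pow2_abs w2), <- (pow2_abs (k * w3)), Rabs_mult.
  assert (Hkw : (Rabs k * Rabs w3) ^ 2 <= Rabs w3 ^ 2).
  { apply pow_incr. split; [apply Rmult_le_pos|]; nra. }
  assert (0 <= Rabs w1 * Rabs w2 + Rabs w1 * Rabs w3 + Rabs w2 * Rabs w3)
    by (repeat apply Rplus_le_le_0_compat; apply Rmult_le_pos; auto).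
  nra.
Qed.

Lemma hnorm_ge_xy (k w1 w2 w3 : R) : sqrt (w1 ^ 2 + w2 ^ 2) <= hnorm k w1 w2 w3.
Proof.
  unfold hnorm. apply sqrt_le_1; [apply sqr_ge0_sum | apply sqr_ge0_sum3 |].
  pose proof (pow2_ge_0 (k * w3)). lra.
Qed.

Lemma hnorm_ge_z (k w1 w2 w3 : R) : 0 <= k -> k * Rabs w3 <= hnorm k w1 w2 w3.
Proof.
  intros Hk. unfold hnorm. apply le_sqrt_of_sqr_le.
  pose proof (pow2_ge_0 w1). pose proof (pow2_ge_0 w2).
  replace ((k * w3) ^ 2) with ((k * Rabs w3) ^ 2)
    by (rewrite <- (pow2_abs (k * w3)), Rabs_mult, (Rabs_right k); [reflexivity | lra]).
  lra.
Qed.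

(* First-order increment of a curve: s times the velocity, plus remainders r_i. *)
Lemma hnorm_increment (k s d1 d2 d3 r1 r2 r3 e : R) : Rabs k <= 1 -> e <= 1 ->
  Rabs r1 <= e * Rabs s -> Rabs r2 <= e * Rabs s -> Rabs r3 <= e * Rabs s ->
  hnorm k (s * d1 + r1) (s * d2 + r2) (s * d3 + r3) <= Rabs s * hnorm k d1 d2 d3 + 3 * e * Rabs s /\
  Rabs (s * d1 + r1) + Rabs (s * d2 + r2) + Rabs (s * d3 + r3)
    <= Rabs s * (Rabs d1 + Rabs d2 + Rabs d3 + 3).
Proof.
  intros Hk He H1 H2 H3. pose proof (Rabs_pos s). split.
  - eapply Rle_trans; [apply hnorm_triangle|]. rewrite hnorm_scal.
    pose proof (hnorm_le_abs k r1 r2 r3 Hk). lra.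
  - pose proof (Rabs_triang (s * d1) r1). pose proof (Rabs_triang (s * d2) r2).
    pose proof (Rabs_triang (s * d3) r3). rewrite !Rabs_mult in *. nra.
Qed.

Lemma derive_remainder (f : R -> R) (t e : R) : ex_derive f t -> 0 < e -> exists d, 0 < d /\
  forall s, Rabs s < d -> Rabs (f (t + s) - f t - s * Derive f t) <= e * Rabs s.
Proof.
  intros Hf He. pose proof (Derive_correct f t Hf) as H.
  apply is_derive_Reals in H. destruct (H e He) as [d Hd].
  exists d. split; [apply cond_pos|]. intros s Hs.
  destruct (Req_dec s 0) as [->|Hs0].
  - rewrite Rplus_0_r, Rabs_R0. replace (f t - f t - 0 * Derive f t) with 0 by ring. rewrite Rabs_R0. lra.
  - specialize (Hd s Hs0 Hs).
    replace (f (t + s) - f t - s * Derive f t) with (s * ((f (t + s) - f t) / s - Derive f t)) by (field; auto).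
    rewrite Rabs_mult, Rmult_comm. apply Rmult_le_compat_r; [apply Rabs_pos | lra].
Qed.

Lemma C1_remainders (fx fy fz : R -> R) (t e : R) :
  Defs.C1 fx -> Defs.C1 fy -> Defs.C1 fz -> 0 < e -> exists d, 0 < d /\ forall s, Rabs s < d ->
    Rabs (fx (t + s) - fx t - s * Derive fx t) <= e * Rabs s /\
    Rabs (fy (t + s) - fy t - s * Derive fy t) <= e * Rabs s /\
    Rabs (fz (t + s) - fz t - s * Derive fz t) <= e * Rabs s.
Proof.
  intros Hx Hy Hz He.
  destruct (derive_remainder fx t e (proj1 (Hx t)) He) as [d1 [Hd1 H1]].
  destruct (derive_remainder fy t e (proj1 (Hy t)) He) as [d2 [Hd2 H2]].
  destruct (derive_remainder fz t e (proj1 (Hz t)) He) as [d3 [Hd3 H3]].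
  exists (Rmin d1 (Rmin d2 d3)). split; [repeat apply Rmin_pos; auto|].
  intros s Hs. apply Rmin_Rgt in Hs as [Hs1 Hs]. apply Rmin_Rgt in Hs as [Hs2 Hs3]. auto.
Qed.

Lemma C1_continuous (f : R -> R) (t : R) : Defs.C1 f -> continuous f t.
Proof. intros H. apply (ex_derive_continuous (K := R_AbsRing) (V := R_NormedModule)), H. Qed.

Section HLength.
Variable a : R.

Lemma continuous_distDelta_comp (fx fy : R -> R) (t : R) : continuous fx t -> continuous fy t ->
  continuous (fun s => distDelta a (fx s) (fy s)) t.
Proof.
  intros Hx Hy. apply continuous_of_eps. intros eps Heps.
  destruct (continuous_eps fx t Hx (eps / 2) ltac:(lra)) as [d1 [Hd1 H1]].
  destruct (continuous_eps fy t Hy (eps / 2) ltac:(lra)) as [d2 [Hd2 H2]].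
  exists (Rmin d1 d2). split; [apply Rmin_pos; auto|]. intros s Hs.
  eapply Rle_lt_trans; [apply distDelta_lipschitz_abs|].
  pose proof (Rmin_l d1 d2). pose proof (Rmin_r d1 d2).
  specialize (H1 s ltac:(lra)). specialize (H2 s ltac:(lra)). lra.
Qed.

Lemma continuous_speed (fx fy fz : R -> R) (t : R) : Defs.C1 fx -> Defs.C1 fy -> Defs.C1 fz ->
  continuous (speed a fx fy fz) t.
Proof.
  intros Hx Hy Hz. apply continuous_sqrt_comp.
  assert (Hdist : continuous (fun s => cos (distDelta a (fx s) (fy s)) ^ 2) t).
  { apply continuous_pow2, continuous_cos_comp, continuous_distDelta_comp; apply C1_continuous; auto. }
  apply (continuous_plus (fun s => Derive fx s ^ 2 + Derive fy s ^ 2)).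
  - apply (continuous_plus (fun s => Derive fx s ^ 2)); apply continuous_pow2; [apply Hx | apply Hy].
  - apply (continuous_mult (fun s => cos (distDelta a (fx s) (fy s)) ^ 2)); [exact Hdist|].
    apply continuous_pow2, Hz.
Qed.

Definition h_Lipschitz (F : R -> R -> R -> R) : Prop :=
  forall x y z eps, 0 < eps -> exists eta, 0 < eta /\
  forall x' y' z', Rabs (x' - x) < eta -> Rabs (y' - y) < eta -> Rabs (z' - z) < eta ->
    Rabs (F x' y' z' - F x y z) <= hnorm (cos (distDelta a x y)) (x' - x) (y' - y) (z' - z)
      + eps * (Rabs (x' - x) + Rabs (y' - y) + Rabs (z' - z)).

Lemma h_Lipschitz_opp (F : R -> R -> R -> R) : h_Lipschitz F -> h_Lipschitz (fun x y z => - F x y z).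
Proof.
  intros H x y z eps Heps. destruct (H x y z eps Heps) as [eta [Heta He]].
  exists eta; split; auto. intros x' y' z' Hx Hy Hz.
  replace (- F x' y' z' - - F x y z) with (- (F x' y' z' - F x y z)) by ring.
  rewrite Rabs_Ropp. auto.
Qed.

Lemma h_Lipschitz_curve_increment (F : R -> R -> R -> R) (fx fy fz : R -> R) (t : R) :
  h_Lipschitz F -> Defs.C1 fx -> Defs.C1 fy -> Defs.C1 fz ->
  forall eps, 0 < eps -> exists d, 0 < d /\ forall s, Rabs s < d ->
    Rabs (F (fx (t + s)) (fy (t + s)) (fz (t + s)) - F (fx t) (fy t) (fz t))
      <= Rabs s * (speed a fx fy fz t + eps).
Proof.
  intros HF Hx Hy Hz eps Heps.
  set (M := Rabs (Derive fx t) + Rabs (Derive fy t) + Rabs (Derive fz t) + 3).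
  assert (HM : 3 <= M)
    by (unfold M; pose proof (Rabs_pos (Derive fx t)); pose proof (Rabs_pos (Derive fy t));
        pose proof (Rabs_pos (Derive fz t)); lra).
  set (e := Rmin 1 (eps / 6)).
  assert (He : 0 < e /\ e <= 1 /\ e <= eps / 6)
    by (unfold e; split; [apply Rmin_pos | split; [apply Rmin_l | apply Rmin_r]]; lra).
  destruct (HF (fx t) (fy t) (fz t) (eps / (2 * M)) ltac:(apply Rdiv_lt_0_compat; lra)) as [eta [Heta HFe]].
  destruct (C1_remainders fx fy fz t e Hx Hy Hz ltac:(lra)) as [d [Hd Hrem]].
  exists (Rmin d (eta / M)). split; [apply Rmin_pos; [|apply Rdiv_lt_0_compat]; lra|].
  intros s Hs. apply Rmin_Rgt in Hs as [Hsd HsM].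
  destruct (Hrem s Hsd) as [H1 [H2 H3]].
  apply (Rmult_lt_compat_r M) in HsM; [|lra]. replace (eta / M * M) with eta in HsM by (field; lra).
  set (k := cos (distDelta a (fx t) (fy t))).
  assert (Hk : Rabs k <= 1) by (unfold k; apply Rabs_le, COS_bound).
  destruct (hnorm_increment k s (Derive fx t) (Derive fy t) (Derive fz t)
    (fx (t + s) - fx t - s * Derive fx t) (fy (t + s) - fy t - s * Derive fy t)
    (fz (t + s) - fz t - s * Derive fz t) e Hk ltac:(lra) H1 H2 H3) as [Hnorm Hsum].
  replace (s * Derive fx t + (fx (t + s) - fx t - s * Derive fx t)) with (fx (t + s) - fx t) in * by ring.
  replace (s * Derive fy t + (fy (t + s) - fy t - s * Derive fy t)) with (fy (t + s) - fy t) in * by ring.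
  replace (s * Derive fz t + (fz (t + s) - fz t - s * Derive fz t)) with (fz (t + s) - fz t) in * by ring.
  fold M in Hsum.
  assert (Hspeed : hnorm k (Derive fx t) (Derive fy t) (Derive fz t) = speed a fx fy fz t)
    by (unfold hnorm, speed, k; f_equal; ring).
  pose proof (Rabs_pos (fx (t + s) - fx t)). pose proof (Rabs_pos (fy (t + s) - fy t)).
  pose proof (Rabs_pos (fz (t + s) - fz t)). pose proof (Rabs_pos s).
  specialize (HFe (fx (t + s)) (fy (t + s)) (fz (t + s)) ltac:(lra) ltac:(lra) ltac:(lra)).
  assert (Herr : eps / (2 * M) * (Rabs (fx (t + s) - fx t) + Rabs (fy (t + s) - fy t) + Rabs (fz (t + s) - fz t))
                 <= Rabs s * (eps / 2)).
  { replace (Rabs s * (eps / 2)) with (eps / (2 * M) * (Rabs s * M)) by (field; lra).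
    apply Rmult_le_compat_l; [apply Rlt_le, Rdiv_lt_0_compat|]; lra. }
  fold k in HFe. rewrite Hspeed in Hnorm. nra.
Qed.

Lemma h_Lipschitz_piece (F : R -> R -> R -> R) (fx fy fz : R -> R) (u v : R) :
  h_Lipschitz F -> Defs.C1 fx -> Defs.C1 fy -> Defs.C1 fz -> u < v ->
  F (fx v) (fy v) (fz v) - F (fx u) (fy u) (fz u) <= RInt (speed a fx fy fz) u v.
Proof.
  intros HF Hx Hy Hz Huv.
  apply (increment_le_RInt (fun t => F (fx t) (fy t) (fz t))); auto.
  - intros t. apply continuous_speed; auto.
  - intros t _ eps Heps. destruct (h_Lipschitz_curve_increment F fx fy fz t HF Hx Hy Hz eps Heps)
      as [d [Hd Hinc]]. exists d. auto.
Qed.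

Definition apply_pt (F : R -> R -> R -> R) (p : pt) : R := let '(x, y, z) := p in F x y z.

Lemma h_Lipschitz_pw_len (F : R -> R -> R -> R) (c : R -> pt) (u : R) (l : list R) (L : R) :
  h_Lipschitz F -> pw_len a c u l L -> apply_pt F (c 1) - apply_pt F (c u) <= L.
Proof.
  intros HF. revert u L. induction l as [|v l IH]; intros u L H; simpl in H.
  - destruct H as [-> ->]. lra.
  - destruct H as [Huv [fx [fy [fz [Hx [Hy [Hz [Hc [L' [Hpw ->]]]]]]]]]].
    specialize (IH v L' Hpw).
    rewrite (Hc u) by lra. rewrite (Hc v) in IH by lra.
    pose proof (h_Lipschitz_piece F fx fy fz u v HF Hx Hy Hz Huv). simpl in *. lra.
Qed.

End HLength.

Lemma h_Lipschitz_linear (a tx ty : R) : 0 < tx ^ 2 + ty ^ 2 ->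
  h_Lipschitz a (fun x y _ => (x * tx + y * ty) / sqrt (tx ^ 2 + ty ^ 2)).
Proof.
  intros Ht x y z eps Heps. exists 1. split; [lra|]. intros x' y' z' _ _ _.
  assert (Hs : 0 < sqrt (tx ^ 2 + ty ^ 2)) by (apply sqrt_lt_R0; auto).
  replace ((x' * tx + y' * ty) / sqrt (tx ^ 2 + ty ^ 2) - (x * tx + y * ty) / sqrt (tx ^ 2 + ty ^ 2))
    with (((x' - x) * tx + (y' - y) * ty) / sqrt (tx ^ 2 + ty ^ 2)) by (field; lra).
  assert (Hcs : Rabs (((x' - x) * tx + (y' - y) * ty) / sqrt (tx ^ 2 + ty ^ 2))
                <= sqrt ((x' - x) ^ 2 + (y' - y) ^ 2)).
  { rewrite Rabs_div by lra. rewrite (Rabs_right (sqrt _)) by lra.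
    apply Rle_div_l; auto. rewrite <- sqrt_mult by apply sqr_ge0_sum.
    apply le_sqrt_of_sqr_le. rewrite pow2_abs.
    pose proof (pow2_ge_0 ((x' - x) * ty - (y' - y) * tx)). nra. }
  pose proof (hnorm_ge_xy (cos (distDelta a x y)) (x' - x) (y' - y) (z' - z)).
  pose proof (Rabs_pos (x' - x)); pose proof (Rabs_pos (y' - y)); pose proof (Rabs_pos (z' - z)).
  assert (0 <= eps * (Rabs (x' - x) + Rabs (y' - y) + Rabs (z' - z))) by (apply Rmult_le_pos; lra).
  lra.
Qed.

Lemma h_Lipschitz_half_height : h_Lipschitz a_hex (fun _ _ z => z / 2).
Proof.
  intros x y z eps Heps. exists 1. split; [lra|]. intros x' y' z' _ _ _.
  replace (z' / 2 - z / 2) with ((z' - z) / 2) by field.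
  rewrite Rabs_div, (Rabs_right 2) by lra.
  pose proof (cos_distDelta_hex_ge x y).
  pose proof (hnorm_ge_z (cos (distDelta a_hex x y)) (x' - x) (y' - y) (z' - z) ltac:(lra)).
  pose proof (Rabs_pos (x' - x)); pose proof (Rabs_pos (y' - y)); pose proof (Rabs_pos (z' - z)).
  assert (0 <= eps * (Rabs (x' - x) + Rabs (y' - y) + Rabs (z' - z))) by (apply Rmult_le_pos; lra).
  nra.
Qed.

(** * The deck group *)

Definition deck_sign (k : Z) : R := if Z.even k then 1 else -1.
Definition deck_tx (m n : Z) : R := PI * IZR m + PI / 2 * IZR n.
Definition deck_ty (n : Z) : R := PI * sqrt 3 / 2 * IZR n.

Lemma pair3_eq (a b c a' b' c' : R) : a = a' -> b = b' -> c = c' -> (a, b, c) = (a', b', c').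
Proof. intros -> -> ->. reflexivity. Qed.

Lemma word_act_hex (w : list (gen * bool)) : exists k m n : Z, forall x y z,
  word_act a_hex w (x, y, z)
  = (deck_sign k * x + deck_tx m n, deck_sign k * y + deck_ty n, z + IZR k * PI).
Proof.
  induction w as [|[g b] w IH].
  - exists 0%Z, 0%Z, 0%Z. intros. simpl. unfold deck_sign, deck_tx, deck_ty. simpl. apply pair3_eq; field.
  - destruct IH as [k [m [n IH]]]. simpl.
    destruct g, b; unfold deck_sign, deck_tx, deck_ty, a_hex in *.
    + exists k, (m + 1)%Z, n. intros. rewrite IH. simpl. rewrite plus_IZR. apply pair3_eq; field.
    + exists k, (m - 1)%Z, n. intros. rewrite IH. simpl. rewrite minus_IZR. apply pair3_eq; field.
    + exists k, m, (n + 1)%Z. intros. rewrite IH. simpl. rewrite plus_IZR. apply pair3_eq; field.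
    + exists k, m, (n - 1)%Z. intros. rewrite IH. simpl. rewrite minus_IZR. apply pair3_eq; field.
    + exists (k + 2)%Z, m, n. intros. rewrite IH. simpl. rewrite Z.even_add, plus_IZR.
      destruct (Z.even k); simpl; apply pair3_eq; field.
    + exists (k - 2)%Z, m, n. intros. rewrite IH. simpl. rewrite Z.even_sub, minus_IZR.
      destruct (Z.even k); simpl; apply pair3_eq; field.
    + exists (k + 1)%Z, (- m)%Z, (- n)%Z. intros. rewrite IH. simpl.
      rewrite Z.even_add, !opp_IZR, plus_IZR. destruct (Z.even k); simpl; apply pair3_eq; field.
    + exists (k - 1)%Z, (- m)%Z, (- n)%Z. intros. rewrite IH. simpl.
      rewrite Z.even_sub, !opp_IZR, minus_IZR. destruct (Z.even k); simpl; apply pair3_eq; field.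
Qed.

Lemma deck_translation_norm (m n : Z) : (m <> 0 \/ n <> 0)%Z ->
  PI ^ 2 <= deck_tx m n ^ 2 + deck_ty n ^ 2.
Proof.
  intros H. assert (Hz : (1 <= m * m + m * n + n * n)%Z) by nia.
  apply IZR_le in Hz. rewrite !plus_IZR, !mult_IZR in Hz.
  unfold deck_tx, deck_ty. pose proof sqrt3_sqr.
  replace ((PI * IZR m + PI / 2 * IZR n) ^ 2 + (PI * sqrt 3 / 2 * IZR n) ^ 2) with
    (PI ^ 2 * (IZR m * IZR m + IZR m * IZR n + (sqrt 3 * sqrt 3 + 1) / 4 * (IZR n * IZR n))) by field.
  rewrite H0. pose proof (pow2_ge_0 PI). nra.
Qed.

(** * Spherical geometry in R^4 *)

Definition R4 := (R * R * R * R)%type.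

Definition dot4 (p q : R4) : R :=
  let '(p1, p2, p3, p4) := p in let '(q1, q2, q3, q4) := q in
  p1 * q1 + p2 * q2 + p3 * q3 + p4 * q4.

Definition lincomb4 (s : R) (p : R4) (t : R) (q : R4) : R4 :=
  let '(p1, p2, p3, p4) := p in let '(q1, q2, q3, q4) := q in
  (s * p1 + t * q1, s * p2 + t * q2, s * p3 + t * q3, s * p4 + t * q4).

Definition opp4 (p : R4) : R4 := let '(p1, p2, p3, p4) := p in (- p1, - p2, - p3, - p4).

Lemma dot4_lincomb_l (s t : R) (p q r : R4) : dot4 (lincomb4 s p t q) r = s * dot4 p r + t * dot4 q r.
Proof. destruct p as [[[? ?] ?] ?], q as [[[? ?] ?] ?], r as [[[? ?] ?] ?]; simpl; ring. Qed.

Lemma dot4_comm (p q : R4) : dot4 p q = dot4 q p.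
Proof. destruct p as [[[? ?] ?] ?], q as [[[? ?] ?] ?]; simpl; ring. Qed.

Lemma dot4_opp_l (p q : R4) : dot4 (opp4 p) q = - dot4 p q.
Proof. destruct p as [[[? ?] ?] ?], q as [[[? ?] ?] ?]; simpl; ring. Qed.

Lemma dot4_self_ge0 (p : R4) : 0 <= dot4 p p.
Proof.
  destruct p as [[[p1 p2] p3] p4]; simpl.
  pose proof (Rle_0_sqr p1); pose proof (Rle_0_sqr p2); pose proof (Rle_0_sqr p3);
  pose proof (Rle_0_sqr p4). unfold Rsqr in *. lra.
Qed.

Lemma cauchy_schwarz4 (p q : R4) : Rabs (dot4 p q) <= sqrt (dot4 p p) * sqrt (dot4 q q).
Proof.
  rewrite <- sqrt_mult by apply dot4_self_ge0. rewrite <- (sqrt_pow2 (Rabs _)) by apply Rabs_pos.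
  apply sqrt_le_1; [apply pow2_ge_0 | apply Rmult_le_pos; apply dot4_self_ge0 |].
  rewrite pow2_abs. destruct p as [[[p1 p2] p3] p4], q as [[[q1 q2] q3] q4]; simpl.
  pose proof (pow2_ge_0 (p1 * q2 - p2 * q1)). pose proof (pow2_ge_0 (p1 * q3 - p3 * q1)).
  pose proof (pow2_ge_0 (p1 * q4 - p4 * q1)). pose proof (pow2_ge_0 (p2 * q3 - p3 * q2)).
  pose proof (pow2_ge_0 (p2 * q4 - p4 * q2)). pose proof (pow2_ge_0 (p3 * q4 - p4 * q3)). nra.
Qed.

Lemma dot4_unit_bound (p q : R4) : dot4 p p = 1 -> dot4 q q = 1 -> -1 <= dot4 p q <= 1.
Proof.
  intros Hp Hq. pose proof (cauchy_schwarz4 p q) as H. rewrite Hp, Hq, sqrt_1 in H.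
  apply Rabs_le_between in H. lra.
Qed.

Lemma acos_antimono (x y : R) : -1 <= x <= 1 -> -1 <= y <= 1 -> x <= y -> acos y <= acos x.
Proof.
  intros Hx Hy Hxy. destruct (Rle_lt_dec (acos y) (acos x)) as [|Hlt]; auto.
  pose proof (acos_bound x); pose proof (acos_bound y).
  assert (cos (acos y) < cos (acos x)) by (apply cos_decreasing_1; lra).
  rewrite !cos_acos in * by lra. lra.
Qed.

(* The angle between unit vectors satisfies the triangle inequality: with
   th1 = angle(p, q) and th2 = angle(q, r), the components of p and r
   orthogonal to q give p.r >= cos (th1 + th2) by Cauchy-Schwarz. *)
Lemma acos_dot4_triangle (p q r : R4) : dot4 p p = 1 -> dot4 q q = 1 -> dot4 r r = 1 ->
  acos (dot4 p r) <= acos (dot4 p q) + acos (dot4 q r).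
Proof.
  intros Hp Hq Hr.
  pose proof (dot4_unit_bound p q Hp Hq). pose proof (dot4_unit_bound q r Hq Hr).
  pose proof (dot4_unit_bound p r Hp Hr).
  pose (th1 := acos (dot4 p q)). pose (th2 := acos (dot4 q r)).
  pose proof (acos_bound (dot4 p q)). pose proof (acos_bound (dot4 q r)). pose proof (acos_bound (dot4 p r)).
  destruct (Rle_lt_dec PI (th1 + th2)); [unfold th1, th2 in *; lra|].
  assert (Hcos : cos (th1 + th2)
    = dot4 p q * dot4 q r - sqrt (1 - (dot4 p q)²) * sqrt (1 - (dot4 q r)²)).
  { rewrite cos_plus. unfold th1, th2. rewrite !cos_acos, !sin_acos by lra. ring. }
  set (p' := lincomb4 1 p (- dot4 p q) q). set (r' := lincomb4 1 r (- dot4 q r) q).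
  assert (Hp' : dot4 p' p' = 1 - (dot4 p q)²).
  { unfold p'. rewrite dot4_lincomb_l, !(dot4_comm _ (lincomb4 _ _ _ _)), !dot4_lincomb_l.
    rewrite (dot4_comm q p), Hp, Hq. unfold Rsqr. ring. }
  assert (Hr' : dot4 r' r' = 1 - (dot4 q r)²).
  { unfold r'. rewrite dot4_lincomb_l, !(dot4_comm _ (lincomb4 _ _ _ _)), !dot4_lincomb_l.
    rewrite (dot4_comm r q), Hr, Hq. unfold Rsqr. ring. }
  assert (Hp'r' : dot4 p' r' = dot4 p r - dot4 p q * dot4 q r).
  { unfold p', r'. rewrite dot4_lincomb_l, !(dot4_comm _ (lincomb4 _ _ _ _)), !dot4_lincomb_l.
    rewrite (dot4_comm r q), (dot4_comm r p), Hq, (dot4_comm q p). ring. }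
  pose proof (cauchy_schwarz4 p' r') as Hcs. rewrite Hp', Hr', Hp'r' in Hcs.
  apply Rabs_le_between in Hcs.
  assert (Hle : acos (dot4 p r) <= acos (cos (th1 + th2))).
  { apply acos_antimono; [apply COS_bound | lra | lra]. }
  rewrite acos_cos in Hle by (unfold th1, th2 in *; lra). exact Hle.
Qed.

Lemma sin_ge_cubic (x : R) : 0 <= x -> x <= 4 -> x - x ^ 3 / 6 <= sin x.
Proof.
  intros H1 H2. destruct (pre_sin_bound x 0 H1 H2) as [H _].
  replace (x - x ^ 3 / 6) with (sin_approx x (2 * 0 + 1)); auto.
  unfold sin_approx, sin_term. simpl. field.
Qed.

(* Quantitatively, acos e ~ sqrt (2 (1 - e)) near e = 1. *)
Lemma acos_le_of_near1 (e c : R) : 0 <= c <= 1 -> -1 <= e <= 1 -> 1 - c ^ 2 / 2 <= e ->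
  acos e <= c + 2 * c ^ 3.
Proof.
  intros Hc He Hce. set (th := acos e). pose proof (acos_bound e) as Hb. fold th in Hb.
  assert (Hcos : cos th = e) by (unfold th; apply cos_acos; lra).
  set (x := th / 2).
  assert (Hx : 0 <= x <= PI / 2) by (unfold x; lra).
  assert (Hs2 : sin x ^ 2 <= c ^ 2 / 4).
  { assert (cos th = 1 - 2 * sin x * sin x) by (unfold x; rewrite <- cos_2a_sin; f_equal; field).
    simpl. lra. }
  assert (Hs0 : 0 <= sin x) by (apply sin_ge_0; lra).
  assert (Hsx : sin x <= c / 2) by nra.
  pose proof PI_4. pose proof PI2_3_2.
  pose proof (sin_ge_cubic x ltac:(lra) ltac:(lra)).
  assert (Hx3 : x ^ 3 / 6 <= 2 / 3 * x) by (assert (x ^ 2 <= 4) by nra; nra).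
  assert (Hxc : x <= 3 / 2 * c) by lra.
  assert (x ^ 3 <= (3 / 2 * c) ^ 3) by (apply pow_incr; lra).
  assert (th = 2 * x) by (unfold x; field).
  assert (0 <= c ^ 3) by (apply pow_le; lra). lra.
Qed.

Lemma sin_abs_le (x : R) : Rabs (sin x) <= Rabs x.
Proof.
  pose proof PI2_1. pose proof (SIN_bound x).
  destruct (Rtotal_order 0 x) as [Hx|[<-|Hx]].
  - pose proof (sin_lt_x x Hx). rewrite (Rabs_right x) by lra. apply Rabs_le. split; [|lra].
    destruct (Rlt_le_dec x PI); [pose proof (sin_gt_0 x Hx ltac:(lra))|]; lra.
  - rewrite sin_0. lra.
  - pose proof (sin_gt_x x Hx). rewrite (Rabs_left x) by lra. apply Rabs_le. split; [lra|].
    destruct (Rlt_le_dec (- PI) x); [pose proof (sin_lt_0_var x ltac:(lra) Hx)|]; lra.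
Qed.

Lemma one_minus_cos_le (u : R) : 2 - 2 * cos u <= u ^ 2.
Proof.
  replace u with (2 * (u / 2)) at 1 by field. rewrite cos_2a_sin.
  assert (sin (u / 2) ^ 2 <= (u / 2) ^ 2).
  { rewrite <- (pow2_abs (sin (u / 2))), <- (pow2_abs (u / 2)).
    apply pow_incr. split; [apply Rabs_pos | apply sin_abs_le]. }
  replace (u ^ 2) with (4 * (u / 2) ^ 2) by field. simpl in *. lra.
Qed.

Lemma cos_lipschitz (u v : R) : Rabs (cos u - cos v) <= Rabs (u - v).
Proof.
  rewrite form2, !Rabs_mult. replace (Rabs (-2)) with 2 by (rewrite Rabs_left; lra).
  pose proof (sin_abs_le ((u - v) / 2)). pose proof (SIN_bound ((u + v) / 2)).
  assert (Rabs (sin ((u + v) / 2)) <= 1) by (apply Rabs_le; lra).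
  replace (Rabs (u - v)) with (2 * Rabs ((u - v) / 2))
    by (rewrite Rabs_div, (Rabs_right 2) by lra; field).
  pose proof (Rabs_pos (sin ((u - v) / 2))). pose proof (Rabs_pos (sin ((u + v) / 2))). nra.
Qed.

Lemma Rmin_lipschitz (u v w : R) : Rabs (Rmin u w - Rmin v w) <= Rabs (u - v).
Proof.
  pose proof (Rle_abs (u - v)) as H1. pose proof (Rle_abs (v - u)) as H2.
  rewrite Rabs_minus_sym in H2.
  unfold Rmin. destruct (Rle_dec u w), (Rle_dec v w); apply Rabs_le; lra.
Qed.

(** * A chart of the round 3-sphere around a singular axis *)

Section SphereChart.
Variables cx cy : R.

Definition radius (x y : R) : R := sqrt ((x - cx) ^ 2 + (y - cy) ^ 2).
Definition capped_radius (x y : R) : R := Rmin (radius x y) (PI / 2).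
(* sin (capped_radius) / radius, which is 0 at the centre (Rinv 0 = 0). *)
Definition sin_ratio (x y : R) : R := sin (capped_radius x y) / radius x y.

Definition sphere_chart (x y z : R) : R4 :=
  (cos (capped_radius x y) * cos z, cos (capped_radius x y) * sin z,
   sin_ratio x y * (x - cx), sin_ratio x y * (y - cy)).

Lemma radius_ge0 (x y : R) : 0 <= radius x y.
Proof. apply sqrt_pos. Qed.

Lemma radius_sqr (x y : R) : radius x y ^ 2 = (x - cx) ^ 2 + (y - cy) ^ 2.
Proof. apply pow2_sqrt, sqr_ge0_sum. Qed.

Lemma capped_radius_bounds (x y : R) :
  0 <= capped_radius x y <= PI / 2 /\ capped_radius x y <= radius x y.
Proof.
  unfold capped_radius. pose proof (radius_ge0 x y). pose proof PI_RGT_0.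
  unfold Rmin. destruct (Rle_dec _ _); lra.
Qed.

Lemma sin_capped_radius (x y : R) : sin (capped_radius x y) = sin_ratio x y * radius x y.
Proof.
  unfold sin_ratio. destruct (Req_dec (radius x y) 0) as [H|H].
  - unfold capped_radius. rewrite H. pose proof PI_RGT_0.
    rewrite Rmin_left by lra. rewrite sin_0. ring.
  - field. exact H.
Qed.

Lemma sin_ratio_bounds (x y : R) : 0 <= sin_ratio x y <= 1.
Proof.
  destruct (capped_radius_bounds x y) as [[H1 H2] H3]. pose proof PI_RGT_0.
  assert (Hs0 : 0 <= sin (capped_radius x y)) by (apply sin_ge_0; lra).
  assert (Hs1 : sin (capped_radius x y) <= radius x y).
  { pose proof (sin_abs_le (capped_radius x y)) as Hsin. rewrite !Rabs_right in Hsin by lra. lra. }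
  unfold sin_ratio. destruct (Req_dec (radius x y) 0) as [Hr|Hr].
  - rewrite Hr. unfold Rdiv. rewrite Rinv_0. lra.
  - pose proof (radius_ge0 x y). split; [apply Rdiv_le_0_compat | apply Rle_div_l]; lra.
Qed.

Lemma sphere_chart_unit (x y z : R) : dot4 (sphere_chart x y z) (sphere_chart x y z) = 1.
Proof.
  unfold sphere_chart, dot4.
  pose proof (sin_capped_radius x y) as Hs. pose proof (radius_sqr x y) as Hr.
  pose proof (sin2_cos2 z) as Hz. pose proof (sin2_cos2 (capped_radius x y)). unfold Rsqr in *.
  set (S := sin_ratio x y) in *. set (c := cos (capped_radius x y)) in *.
  transitivity (c * c * (sin z * sin z + cos z * cos z) + S * S * ((x - cx) ^ 2 + (y - cy) ^ 2)); [ring|].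
  rewrite Hz, <- Hr. replace (S * S * radius x y ^ 2) with (sin (capped_radius x y) * sin (capped_radius x y))
    by (rewrite Hs; ring).
  lra.
Qed.

Lemma sphere_chart_half_turn (x y z s : R) : s = PI \/ s = - PI ->
  sphere_chart (2 * cx - x) (2 * cy - y) (z + s) = opp4 (sphere_chart x y z).
Proof.
  intros Hs.
  assert (Hr : radius (2 * cx - x) (2 * cy - y) = radius x y) by (unfold radius; f_equal; ring).
  assert (Hc : cos (z + s) = - cos z /\ sin (z + s) = - sin z).
  { destruct Hs as [-> | ->]; [split; [apply neg_cos | apply neg_sin]|].
    replace (z + - PI) with (z - PI) by ring. rewrite cos_minus, sin_minus, cos_PI, sin_PI.
    split; ring. }
  unfold sphere_chart, sin_ratio, capped_radius, opp4. rewrite Hr, (proj1 Hc), (proj2 Hc).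
  f_equal; [f_equal; [f_equal|]|]; ring.
Qed.

(* The chart is 1-Lipschitz for the model metric dr^2 + sin^2 r dtheta^2 + cos^2 r dz^2,
   stated here in the chordal form used to compare with h. *)
Lemma sphere_chart_chord (x1 y1 z1 x2 y2 z2 k1 k2 : R) :
  cos (capped_radius x1 y1) <= k1 -> cos (capped_radius x2 y2) <= k2 ->
  2 - 2 * dot4 (sphere_chart x1 y1 z1) (sphere_chart x2 y2 z2)
    <= (x2 - x1) ^ 2 + (y2 - y1) ^ 2 + k1 * k2 * (z2 - z1) ^ 2.
Proof.
  intros Hk1 Hk2. pose proof PI_RGT_0.
  destruct (capped_radius_bounds x1 y1) as [[Hp1 Hp1'] _].
  destruct (capped_radius_bounds x2 y2) as [[Hp2 Hp2'] _].
  pose proof (sin_capped_radius x1 y1) as Hs1. pose proof (sin_capped_radius x2 y2) as Hs2.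
  pose proof (sin_ratio_bounds x1 y1) as HS1. pose proof (sin_ratio_bounds x2 y2) as HS2.
  pose proof (radius_sqr x1 y1) as Hr1. pose proof (radius_sqr x2 y2) as Hr2.
  pose proof (cauchy_schwarz2 (x1 - cx) (y1 - cy) (x2 - cx) (y2 - cy)) as Hcs.
  fold (radius x1 y1) (radius x2 y2) in Hcs.
  assert (Hradial : 2 - 2 * (cos (capped_radius x1 y1) * cos (capped_radius x2 y2)
            + sin (capped_radius x1 y1) * sin (capped_radius x2 y2)) <= (radius x1 y1 - radius x2 y2) ^ 2).
  { rewrite <- cos_minus. eapply Rle_trans; [apply one_minus_cos_le|].
    rewrite <- (pow2_abs (_ - _)), <- (pow2_abs (radius x1 y1 - radius x2 y2)).
    apply pow_incr. split; [apply Rabs_pos | apply Rmin_lipschitz]. }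
  assert (Hvertical : cos (capped_radius x1 y1) * cos (capped_radius x2 y2) * (2 - 2 * cos (z1 - z2))
            <= k1 * k2 * (z2 - z1) ^ 2).
  { pose proof (one_minus_cos_le (z1 - z2)). pose proof (COS_bound (z1 - z2)).
    assert (0 <= cos (capped_radius x1 y1)) by (apply cos_ge_0; lra).
    assert (0 <= cos (capped_radius x2 y2)) by (apply cos_ge_0; lra).
    replace ((z2 - z1) ^ 2) with ((z1 - z2) ^ 2) by ring.
    apply Rmult_le_compat; try lra; [apply Rmult_le_pos; lra | apply Rmult_le_compat; lra]. }
  rewrite cos_minus in Hvertical. rewrite Hs1, Hs2 in Hradial.
  unfold sphere_chart, dot4.
  set (S1 := sin_ratio x1 y1) in *. set (S2 := sin_ratio x2 y2) in *.
  set (r1 := radius x1 y1) in *. set (r2 := radius x2 y2) in *.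
  set (I := (x1 - cx) * (x2 - cx) + (y1 - cy) * (y2 - cy)) in *.
  assert (Hangular : 2 * (S1 * S2) * (r1 * r2 - I) <= 2 * (r1 * r2 - I)).
  { assert (0 <= S1 * S2 <= 1) by (split; [apply Rmult_le_pos|]; nra). nra. }
  assert (Hsum : (r1 - r2) ^ 2 + 2 * (r1 * r2 - I) = (x2 - x1) ^ 2 + (y2 - y1) ^ 2).
  { transitivity (r1 ^ 2 + r2 ^ 2 - 2 * I); [ring|]. rewrite Hr1, Hr2. unfold I. ring. }
  set (c1 := cos (capped_radius x1 y1)) in *. set (c2 := cos (capped_radius x2 y2)) in *.
  set (C := cos z1 * cos z2 + sin z1 * sin z2) in *.
  assert (Hsplit : 2 - 2 * (c1 * cos z1 * (c2 * cos z2) + c1 * sin z1 * (c2 * sin z2)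
      + S1 * (x1 - cx) * (S2 * (x2 - cx)) + S1 * (y1 - cy) * (S2 * (y2 - cy)))
    = (2 - 2 * (c1 * c2 + S1 * r1 * (S2 * r2))) + c1 * c2 * (2 - 2 * C) + 2 * (S1 * S2) * (r1 * r2 - I))
    by (unfold C, I; ring).
  lra.
Qed.

End SphereChart.

Lemma acos_dot4_le_chord (P Q : R4) (W : R) : dot4 P P = 1 -> dot4 Q Q = 1 ->
  2 - 2 * dot4 P Q <= W -> W <= 1 -> acos (dot4 P Q) <= sqrt W + 2 * (sqrt W * W).
Proof.
  intros HP HQ Hch HW1. pose proof (dot4_unit_bound P Q HP HQ).
  assert (HW0 : 0 <= W) by lra.
  assert (Hc : 0 <= sqrt W <= 1) by (split; [apply sqrt_pos | apply sqrt_le_of_sqr_le; lra]).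
  assert (Hcube : sqrt W * W = sqrt W ^ 3) by (rewrite <- (sqrt_sqrt W) at 2 by lra; ring).
  rewrite Hcube.
  apply acos_le_of_near1; [lra | lra |]. rewrite pow2_sqrt by lra. lra.
Qed.

(* The weight cos (dist) at the second point is within |dx| + |dy| of the one
   at the first: this is what the extra term sqrt (|dx| + |dy|) |dz| absorbs. *)
Lemma sqrt_chord_le_hnorm (kP kQ dx dy dz : R) : 0 <= kP <= 1 -> kQ - kP <= Rabs dx + Rabs dy ->
  sqrt (dx ^ 2 + dy ^ 2 + kP * kQ * dz ^ 2) <= hnorm kP dx dy dz + sqrt (Rabs dx + Rabs dy) * Rabs dz.
Proof.
  intros HkP HkQ. set (s := Rabs dx + Rabs dy) in *.
  assert (Hs : 0 <= s) by (unfold s; pose proof (Rabs_pos dx); pose proof (Rabs_pos dy); lra).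
  assert (Hk : kP * kQ <= kP ^ 2 + s).
  { replace (kP * kQ) with (kP ^ 2 + kP * (kQ - kP)) by ring.
    destruct (Rle_lt_dec kQ kP).
    - assert (0 <= kP * (kP - kQ)) by (apply Rmult_le_pos; lra).
      replace (kP * (kQ - kP)) with (- (kP * (kP - kQ))) by ring. lra.
    - assert (kP * (kQ - kP) <= 1 * (kQ - kP)) by (apply Rmult_le_compat_r; lra). lra. }
  eapply Rle_trans; [|apply sqrt_sum_sq_le; [apply sqrt_pos | apply Rmult_le_pos; [apply sqrt_pos | apply Rabs_pos]]].
  apply sqrt_le_1_alt. unfold hnorm. rewrite pow2_sqrt by apply sqr_ge0_sum3.
  replace ((sqrt s * Rabs dz) ^ 2) with (s * dz ^ 2)
    by (rewrite Rpow_mult_distr, (pow2_sqrt s Hs), pow2_abs; reflexivity).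
  pose proof (pow2_ge_0 dz). nra.
Qed.

Lemma cos_capped_radius_le (cx cy x y : R) : distDelta a_hex x y <= radius cx cy x y ->
  cos (capped_radius cx cy x y) <= cos (distDelta a_hex x y).
Proof.
  intros Hd. pose proof (distDelta_hex_le x y). pose proof (distDelta_ge0 a_hex x y).
  destruct (capped_radius_bounds cx cy x y) as [[H1 H2] H3]. pose proof PI_RGT_0.
  assert (Hle : distDelta a_hex x y <= capped_radius cx cy x y) by (apply Rmin_glb; lra).
  destruct (Req_dec (distDelta a_hex x y) (capped_radius cx cy x y)) as [<-|Hne]; [lra|].
  left. apply cos_decreasing_1; lra.
Qed.

Lemma acos_chord_le_hnorm (P Q : R4) (kP kQ dx dy dz eps : R) : dot4 P P = 1 -> dot4 Q Q = 1 ->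
  0 <= kP <= 1 -> 0 <= kQ <= 1 -> kQ - kP <= Rabs dx + Rabs dy ->
  2 - 2 * dot4 P Q <= dx ^ 2 + dy ^ 2 + kP * kQ * dz ^ 2 ->
  Rabs dx + Rabs dy + Rabs dz <= 1 / 2 -> Rabs dx + Rabs dy + Rabs dz <= eps / 8 ->
  Rabs dx + Rabs dy <= (eps / 4) ^ 2 ->
  acos (dot4 P Q) <= hnorm kP dx dy dz + eps / 2 * (Rabs dx + Rabs dy + Rabs dz).
Proof.
  intros HP HQ HkP HkQ HkQP Hch Hhalf Heps Hxy.
  set (W := dx ^ 2 + dy ^ 2 + kP * kQ * dz ^ 2) in *.
  set (sum := Rabs dx + Rabs dy + Rabs dz) in *.
  pose proof (Rabs_pos dx); pose proof (Rabs_pos dy); pose proof (Rabs_pos dz).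
  assert (Hsum : 0 <= sum) by (unfold sum; lra).
  assert (HW : W <= sum ^ 2).
  { unfold W, sum. rewrite <- (pow2_abs dx), <- (pow2_abs dy), <- (pow2_abs dz).
    assert (kP * kQ <= 1) by nra. assert (0 <= kP * kQ) by nra. nra. }
  assert (HcW : sqrt W <= sum) by (apply sqrt_le_of_sqr_le; lra).
  assert (Hacos := acos_dot4_le_chord P Q W HP HQ Hch ltac:(nra)).
  assert (Hcubic : 2 * (sqrt W * W) <= eps / 4 * sum).
  { pose proof (sqrt_pos W).
    assert (HWe : W <= sum * (eps / 8)).
    { apply Rle_trans with (sum * sum); [simpl in HW; lra|]. apply Rmult_le_compat_l; lra. }
    assert (0 <= eps / 4 * sum) by (apply Rmult_le_pos; lra).
    apply Rle_trans with (sqrt W * (eps / 4 * sum)).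
    - replace (sqrt W * (eps / 4 * sum)) with (2 * (sqrt W * (sum * (eps / 8)))) by field.
      apply Rmult_le_compat_l; [lra|]. apply Rmult_le_compat_l; lra.
    - rewrite <- (Rmult_1_l (eps / 4 * sum)) at 2. apply Rmult_le_compat_r; lra. }
  assert (Hsqrt : sqrt (Rabs dx + Rabs dy) <= eps / 4) by (apply sqrt_le_of_sqr_le; nra).
  pose proof (sqrt_chord_le_hnorm kP kQ dx dy dz HkP HkQP) as Hnorm. fold W in Hnorm.
  assert (sqrt (Rabs dx + Rabs dy) * Rabs dz <= eps / 4 * sum)
    by (unfold sum; apply Rmult_le_compat; try lra; apply sqrt_pos).
  lra.
Qed.

(* The hypothesis on the distance says that (cx, cy) lies in Delta. *)
Lemma h_Lipschitz_sphere_angle (cx cy : R) (v : R4) : dot4 v v = 1 ->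
  (forall x y, distDelta a_hex x y <= radius cx cy x y) ->
  h_Lipschitz a_hex (fun x y z => acos (dot4 (sphere_chart cx cy x y z) v)).
Proof.
  intros Hv Hd x y z eps Heps.
  set (eta := Rmin (Rmin (1 / 6) (eps / 24)) (eps ^ 2 / 32)).
  assert (Heta : 0 < eta /\ eta <= 1 / 6 /\ eta <= eps / 24 /\ eta <= eps ^ 2 / 32).
  { pose proof (Rmin_l (Rmin (1 / 6) (eps / 24)) (eps ^ 2 / 32)).
    pose proof (Rmin_r (Rmin (1 / 6) (eps / 24)) (eps ^ 2 / 32)).
    pose proof (Rmin_l (1 / 6) (eps / 24)). pose proof (Rmin_r (1 / 6) (eps / 24)).
    assert (0 < eps ^ 2) by (apply pow_lt; lra).
    unfold eta; split; [repeat apply Rmin_pos|]; lra. }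
  exists eta. split; [lra|]. intros x' y' z' Hx Hy Hz.
  set (P := sphere_chart cx cy x y z). set (Q := sphere_chart cx cy x' y' z').
  assert (HP : dot4 P P = 1) by apply sphere_chart_unit.
  assert (HQ : dot4 Q Q = 1) by apply sphere_chart_unit.
  assert (Htri : Rabs (acos (dot4 Q v) - acos (dot4 P v)) <= acos (dot4 P Q)).
  { pose proof (acos_dot4_triangle Q P v HQ HP Hv). pose proof (acos_dot4_triangle P Q v HP HQ Hv).
    rewrite (dot4_comm Q P) in *. apply Rabs_le; lra. }
  set (kP := cos (distDelta a_hex x y)). set (kQ := cos (distDelta a_hex x' y')).
  assert (HkP : 0 <= kP <= 1)
    by (pose proof (cos_distDelta_hex_ge x y); pose proof (COS_bound (distDelta a_hex x y)); unfold kP; lra).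
  assert (HkQ : 0 <= kQ <= 1)
    by (pose proof (cos_distDelta_hex_ge x' y'); pose proof (COS_bound (distDelta a_hex x' y')); unfold kQ; lra).
  assert (HkQP : kQ - kP <= Rabs (x' - x) + Rabs (y' - y)).
  { pose proof (cos_lipschitz (distDelta a_hex x' y') (distDelta a_hex x y)).
    pose proof (distDelta_lipschitz_abs a_hex x y x' y').
    pose proof (Rle_abs (kQ - kP)). unfold kP, kQ in *. lra. }
  assert (Hch : 2 - 2 * dot4 P Q <= (x' - x) ^ 2 + (y' - y) ^ 2 + kP * kQ * (z' - z) ^ 2)
    by (apply sphere_chart_chord; apply cos_capped_radius_le, Hd).
  assert (Hsmall : Rabs (x' - x) + Rabs (y' - y) <= (eps / 4) ^ 2) by nra.
  pose proof (acos_chord_le_hnorm P Q kP kQ (x' - x) (y' - y) (z' - z) eps HP HQ HkP HkQ HkQP Hch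
    ltac:(lra) ltac:(lra) Hsmall).
  assert (0 <= eps * (Rabs (x' - x) + Rabs (y' - y) + Rabs (z' - z))).
  { apply Rmult_le_pos; [lra|]. pose proof (Rabs_pos (x' - x)); pose proof (Rabs_pos (y' - y)).
    pose proof (Rabs_pos (z' - z)). lra. }
  fold P Q. lra.
Qed.

(** * The systole *)

Section DeckPath.
Variables (c : R -> pt) (l : list R) (L x0 y0 z0 : R).
Hypothesis c_len : pw_len a_hex c 0 l L.
Hypothesis c_start : c 0 = (x0, y0, z0).

Lemma length_ge_translation (m n : Z) : (m <> 0 \/ n <> 0)%Z ->
  c 1 = (x0 + deck_tx m n, y0 + deck_ty n, z0) -> PI <= L.
Proof.
  intros Hmn Hend. pose proof PI_RGT_0.
  set (T := deck_tx m n ^ 2 + deck_ty n ^ 2).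
  assert (HT : PI ^ 2 <= T) by (apply deck_translation_norm, Hmn).
  assert (HT0 : 0 < T) by (pose proof (pow_lt PI 2 ltac:(lra)); lra).
  pose proof (h_Lipschitz_pw_len a_hex _ c 0 l L (h_Lipschitz_linear a_hex _ _ HT0) c_len) as Hb.
  rewrite Hend, c_start in Hb. cbn beta iota delta [apply_pt] in Hb. fold T in Hb.
  replace ((x0 + deck_tx m n) * deck_tx m n + (y0 + deck_ty n) * deck_ty n)
    with ((x0 * deck_tx m n + y0 * deck_ty n) + T) in Hb by (unfold T; ring).
  assert (Hs : 0 < sqrt T) by (apply sqrt_lt_R0; lra).
  replace ((x0 * deck_tx m n + y0 * deck_ty n + T) / sqrt T - (x0 * deck_tx m n + y0 * deck_ty n) / sqrt T)
    with (sqrt T) in Hb by (rewrite <- (sqrt_sqrt T) at 2 by lra; field; lra).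
  assert (PI <= sqrt T) by (apply le_sqrt_of_sqr_le; exact HT). lra.
Qed.

Lemma length_ge_vertical (dx dy dz : R) : 2 * PI <= Rabs dz ->
  c 1 = (dx, dy, z0 + dz) -> PI <= L.
Proof.
  intros Hdz Hend.
  assert (Hb : forall F, h_Lipschitz a_hex F -> apply_pt F (c 1) - apply_pt F (c 0) <= L)
    by (intros F HF; apply (h_Lipschitz_pw_len a_hex F c 0 l L HF c_len)).
  pose proof (Hb _ h_Lipschitz_half_height) as Hup.
  pose proof (Hb _ (h_Lipschitz_opp a_hex _ h_Lipschitz_half_height)) as Hdown.
  rewrite Hend, c_start in Hup, Hdown. cbn beta iota delta [apply_pt] in Hup, Hdown.
  destruct (Rle_lt_dec 0 dz); [rewrite Rabs_right in Hdz | rewrite Rabs_left in Hdz]; lra.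
Qed.

(* The half-turn axis sits over the point (deck_tx m n / 2, deck_ty n / 2) of Delta. *)
Lemma length_ge_half_turn (m n : Z) (s : R) : s = PI \/ s = - PI ->
  c 1 = (- x0 + deck_tx m n, - y0 + deck_ty n, z0 + s) -> PI <= L.
Proof.
  intros Hs Hend.
  set (cx := deck_tx m n / 2). set (cy := deck_ty n / 2).
  assert (Hd : forall x y, distDelta a_hex x y <= radius cx cy x y).
  { intros x y. eapply Rle_trans; [apply (distDelta_le a_hex x y m n)|]. right.
    unfold radius. f_equal. unfold cx, cy, deck_tx, deck_ty, a_hex. field. }
  set (v := sphere_chart cx cy x0 y0 z0).
  assert (Hv : dot4 v v = 1) by apply sphere_chart_unit.
  pose proof (h_Lipschitz_pw_len a_hex _ c 0 l L (h_Lipschitz_sphere_angle cx cy v Hv Hd) c_len) as Hb.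
  rewrite Hend, c_start in Hb. cbn beta iota delta [apply_pt] in Hb.
  replace (- x0 + deck_tx m n) with (2 * cx - x0) in Hb by (unfold cx; field).
  replace (- y0 + deck_ty n) with (2 * cy - y0) in Hb by (unfold cy; field).
  rewrite (sphere_chart_half_turn cx cy x0 y0 z0 s Hs) in Hb. fold v in Hb.
  rewrite dot4_opp_l, Hv, acos_opp, acos_1 in Hb. lra.
Qed.

End DeckPath.

Lemma length_ge_PI (c : R -> pt) (w : list (gen * bool)) (L : R) :
  (exists q, word_act a_hex w q <> q) -> c 1 = word_act a_hex w (c 0) ->
  curve_length a_hex c L -> PI <= L.
Proof.
  intros [q Hq] Hc [l Hl].
  destruct (word_act_hex w) as [k [m [n Hw]]].
  destruct (c 0) as [[x0 y0] z0] eqn:Hc0. rewrite Hw in Hc.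
  pose proof PI_RGT_0.
  assert (Hk : (k = 0 \/ k = 1 \/ k = -1 \/ 2 <= k \/ k <= -2)%Z) by lia.
  destruct Hk as [-> | [-> | [-> | Hk]]].
  - apply (length_ge_translation c l L x0 y0 z0 Hl Hc0 m n).
    + destruct (Z.eq_dec m 0), (Z.eq_dec n 0); try tauto. subst. exfalso. apply Hq.
      destruct q as [[x y] z]. rewrite Hw. unfold deck_sign, deck_tx, deck_ty. simpl. apply pair3_eq; ring.
    + rewrite Hc. unfold deck_sign. simpl. apply pair3_eq; ring.
  - apply (length_ge_half_turn c l L x0 y0 z0 Hl Hc0 m n PI); [now left|].
    rewrite Hc. unfold deck_sign. simpl. apply pair3_eq; ring.
  - apply (length_ge_half_turn c l L x0 y0 z0 Hl Hc0 m n (- PI)); [now right|].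
    rewrite Hc. unfold deck_sign. simpl. apply pair3_eq; ring.
  - apply (length_ge_vertical c l L x0 y0 z0 Hl Hc0 (deck_sign k * x0 + deck_tx m n)
      (deck_sign k * y0 + deck_ty n) (IZR k * PI)); [|exact Hc].
    rewrite Rabs_mult, (Rabs_right PI) by lra. apply Rmult_le_compat_r; [lra|].
    destruct Hk as [Hk|Hk]; apply IZR_le in Hk; [rewrite Rabs_right | rewrite Rabs_left]; lra.
Qed.

Lemma C1_affine (p q : R) : Defs.C1 (fun t => p * t + q).
Proof.
  intros t. split.
  - auto_derive. auto.
  - apply (continuous_ext (fun _ => p)); [|apply continuous_const].
    intros x. symmetry. apply is_derive_unique. auto_derive; auto. ring.
Qed.

(* The straight segment along the first period witnesses that the set of
   lengths is non-empty, so its infimum is a real number. *)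
Lemma Sys_C2_hex_ge : PI <= Sys_C2 a_hex.
Proof.
  unfold Sys_C2.
  set (E := fun L => exists (c : R -> pt) (w : list (gen * bool)),
    (exists q, word_act a_hex w q <> q) /\ c 1 = word_act a_hex w (c 0) /\ curve_length a_hex c L).
  pose proof PI_RGT_0.
  set (fx := fun t => PI * t + 0). set (f0 := fun t : R => 0 * t + 0).
  set (L0 := RInt (speed a_hex fx f0 f0) 0 1 + 0).
  assert (HE : E L0).
  { exists (fun t => (fx t, f0 t, f0 t)), (cons (T1, true) nil). split; [|split].
    - exists (0, 0, 0). simpl. intros Heq. injection Heq. unfold a_hex. lra.
    - simpl. unfold fx, f0, a_hex. apply pair3_eq; field.
    - exists (cons 1 nil). simpl. split; [lra|]. exists fx, f0, f0.
      split; [apply C1_affine|]. split; [apply C1_affine|]. split; [apply C1_affine|].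
      split; [intros; reflexivity|]. exists 0. split; [split; reflexivity | reflexivity]. }
  destruct (Glb_Rbar_correct E) as [Hlb Hglb].
  assert (Hpi : Rbar_le (Finite PI) (Glb_Rbar E)).
  { apply Hglb. intros L [c [w [Hq [Hc Hl]]]]. simpl. eapply length_ge_PI; eauto. }
  specialize (Hlb L0 HE).
  destruct (Glb_Rbar E) as [r| |]; simpl in *; auto; contradiction.
Qed.

(** * The volume *)

Definition row_integral (y : R) : R := RInt (fun x => cos (distDelta a_hex x y)) 0 (4 * a_hex).

Lemma continuous_cos_distDelta_x (y t : R) : continuous (fun x => cos (distDelta a_hex x y)) t.
Proof.
  apply continuous_cos_comp, (continuous_distDelta_comp a_hex (fun x => x) (fun _ => y)).
  - apply (continuous_id (U := R_UniformSpace)).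
  - apply continuous_const_R.
Qed.

Lemma row_integral_lipschitz (y y' : R) : Rabs (row_integral y' - row_integral y) <= 4 * a_hex * Rabs (y' - y).
Proof.
  unfold row_integral. pose proof PI_RGT_0. assert (Ha : 0 < 4 * a_hex) by (unfold a_hex; lra).
  rewrite <- (RInt_minus (V := R_CompleteNormedModule))
    by (apply (ex_RInt_cont _ (continuous_cos_distDelta_x _))).
  replace (4 * a_hex * Rabs (y' - y)) with ((4 * a_hex - 0) * Rabs (y' - y)) by ring.
  apply abs_RInt_le_const; [lra | |].
  - apply ex_RInt_cont. intros t.
    apply (continuous_minus (fun x => cos (distDelta a_hex x y'))); apply continuous_cos_distDelta_x.
  - intros t _. eapply Rle_trans; [apply cos_lipschitz|]. eapply Rle_trans; [apply distDelta_lipschitz_abs|].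
    rewrite Rminus_diag, Rabs_R0. lra.
Qed.

Lemma continuous_row_integral (y : R) : continuous row_integral y.
Proof.
  apply continuous_of_eps. intros eps Heps. pose proof PI_RGT_0.
  assert (Ha : 0 < 4 * a_hex) by (unfold a_hex; lra).
  exists (eps / (4 * a_hex)). split; [apply Rdiv_lt_0_compat; lra|]. intros y' Hy'.
  eapply Rle_lt_trans; [apply row_integral_lipschitz|].
  apply (Rmult_lt_compat_l (4 * a_hex)) in Hy'; auto.
  replace (4 * a_hex * (eps / (4 * a_hex))) with eps in Hy' by (field; lra). lra.
Qed.

Lemma row_integral_bounds (y : R) : 2 * a_hex <= row_integral y <= 4 * a_hex.
Proof.
  unfold row_integral. pose proof PI_RGT_0. assert (Ha : 0 < a_hex) by (unfold a_hex; lra).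
  split.
  - replace (2 * a_hex) with ((4 * a_hex - 0) * (1 / 2)) by field.
    apply RInt_ge_const; [apply continuous_cos_distDelta_x | lra |].
    intros; apply cos_distDelta_hex_ge.
  - replace (4 * a_hex) with ((4 * a_hex - 0) * 1) at 2 by ring.
    apply RInt_le_const; [apply continuous_cos_distDelta_x | lra |].
    intros; apply COS_bound.
Qed.

(* The centre of a triangle of Delta is at distance 2a / sqrt 3 from it. *)
Lemma distDelta_hex_centroid_pos : 0 < distDelta a_hex (PI / 4) (PI * sqrt 3 / 12).
Proof.
  pose proof PI_RGT_0. pose proof sqrt3_sqr. pose proof sqrt3_pos.
  assert (HPI2 : 0 < PI ^ 2) by (apply pow_lt; lra).
  apply Rlt_le_trans with (sqrt (PI ^ 2 / 48)); [apply sqrt_lt_R0; lra|].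
  apply distDelta_ge. intros m n. apply sqrt_le_1; [lra | apply sqr_ge0_sum |].
  assert (Hz : (1 <= (1 - 3 * n) * (1 - 3 * n))%Z) by nia.
  apply IZR_le in Hz. rewrite mult_IZR, minus_IZR, mult_IZR in Hz.
  assert (E : (PI * sqrt 3 / 12 - PI / 4 * sqrt 3 * IZR n) ^ 2
              = PI ^ 2 / 48 * ((1 - 3 * IZR n) * (1 - 3 * IZR n))).
  { transitivity (PI ^ 2 * (sqrt 3 * sqrt 3) / 144 * ((1 - 3 * IZR n) * (1 - 3 * IZR n))); [field|].
    rewrite H0. field. }
  unfold a_hex. rewrite E. pose proof (pow2_ge_0 (PI / 4 - (2 * (PI / 4) * IZR m + PI / 4 * IZR n))).
  nra.
Qed.

Lemma row_integral_lt_at_centroid : row_integral (PI * sqrt 3 / 12) < 4 * a_hex.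
Proof.
  unfold row_integral. pose proof PI_RGT_0.
  apply Rlt_le_trans with (RInt (fun _ => 1) 0 (4 * a_hex)); [|rewrite RInt_const_R; lra].
  apply (RInt_lt_at _ _ 0 (4 * a_hex) (PI / 4));
    [apply continuous_cos_distDelta_x | intros; apply continuous_const_R | unfold a_hex; lra
    | intros; apply COS_bound |].
  pose proof distDelta_hex_centroid_pos. pose proof (distDelta_hex_le (PI / 4) (PI * sqrt 3 / 12)).
  rewrite <- cos_0. apply cos_decreasing_1; lra.
Qed.

Definition section_integral : R := RInt row_integral 0 (2 * a_hex * sqrt 3).

Lemma section_integral_bounds : 0 < section_integral < PI ^ 2 * sqrt 3 / 2.
Proof.
  pose proof PI_RGT_0. pose proof sqrt3_pos.
  assert (HY : 0 < 2 * a_hex * sqrt 3) by (unfold a_hex; apply Rmult_lt_0_compat; lra).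
  unfold section_integral. split.
  - eapply Rlt_le_trans;
      [|apply (RInt_ge_const row_integral continuous_row_integral 0 _ (2 * a_hex)); [lra|]].
    + apply Rmult_lt_0_compat; [lra | unfold a_hex; lra].
    + intros; apply row_integral_bounds.
  - apply Rlt_le_trans with (RInt (fun _ => 4 * a_hex) 0 (2 * a_hex * sqrt 3));
      [|rewrite RInt_const_R; unfold a_hex; apply Req_le; field].
    apply (RInt_lt_at _ _ 0 _ (PI * sqrt 3 / 12));
      [apply continuous_row_integral | intros; apply continuous_const_R | |
       intros; apply row_integral_bounds | apply row_integral_lt_at_centroid].
    unfold a_hex. assert (0 < PI * sqrt 3) by (apply Rmult_lt_0_compat; lra). lra.
Qed.

Lemma Vol_C2_hex : Vol_C2 a_hex = PI * section_integral.
Proof.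
  unfold Vol_C2. change (RInt (fun _ => section_integral) 0 PI = PI * section_integral).
  rewrite RInt_const_R. change ((PI - 0) * section_integral = PI * section_integral). ring.
Qed.

Theorem mainTheorem6 :
  Sys_C2 a_hex ^ 3 / Vol_C2 a_hex > 2 / sqrt 3.
Proof.
  pose proof Sys_C2_hex_ge as HS. pose proof section_integral_bounds as [HI0 HI1].
  pose proof PI_RGT_0. pose proof sqrt3_pos.
  rewrite Vol_C2_hex. set (S := Sys_C2 a_hex) in *. set (V := PI * section_integral).
  assert (HV : 0 < V) by (apply Rmult_lt_0_compat; lra).
  assert (HVS : 2 * V < S ^ 3 * sqrt 3).
  { assert (PI ^ 3 <= S ^ 3) by (apply pow_incr; lra).
    assert (2 * V < PI ^ 3 * sqrt 3) by (unfold V; nra). nra. }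
  replace (S ^ 3 / V) with (2 / sqrt 3 + (S ^ 3 * sqrt 3 - 2 * V) / (V * sqrt 3)) by (field; lra).
  assert (0 < (S ^ 3 * sqrt 3 - 2 * V) / (V * sqrt 3)) by (apply Rdiv_lt_0_compat; nra).
  lra.
Qed.
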